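(* Let $K$ be a field and $E$ a row-finite graph with a fixed choice of special edges. Let $x$ and $x'$ be cycles in $E$ which have no common vertex. Then the right $L(E)$-modules $W(F_x,\phi_x)$ and $W(F_{x'},\phi_{x'})$ are not isomorphic.
   Context: Let $E=(E^0,E^1,s,r)$ be a row-finite directed graph. A vertex is regular if it emits at least one edge. For every regular vertex $v$ a fixed edge $e^v\in s^{-1}(v)$ is chosen; these are called special, all other edges nonspecial. A path of length $n\ge 1$ is a word $y_1\dots y_n$ of edges with $r(y_i)=s(y_{i+1})$; a path of length $0$ is a vertex. A cycle is a path $x_1\dots x_m$ of length $\ge1$ with $s(x_1)=r(x_m)$ and $s(x_i)\ne s(x_j)$ for $i\neq j$. The double graph $E_d$ has vertex set $E^0$ and edges $\{e,e^*: e\in E^1\}$ with $s_d(e)=s(e)$, $r_d(e)=r(e)$, $s_d(e^* )=r(e)$, $r_d(e^* )=s(e)$; the $e$ are real, the $e^*$ ghost edges. For a path $p=e_1\dots e_n$ in $E$ set $p^*=e_n^*\dots e_1^*$. The set $X$ of basis paths consists of the following paths in $E_d$: all vertices; all $p$ and $p^*$ with $p$ a path of length $\ge1$ in $E$; all $pq^*$ with $p=e_1\dots e_k$, $q=f_1\dots f_n$ paths of length $\ge 1$ in $E$, $r(p)=r(q)$, and either $e_k\ne f_n$ or $e_k=f_n$ nonspecial. The Leavitt path algebra $L(E)$ over $K$ is generated by $\{v,e,e^*: v\in E^0,e\in E^1\}$ subject to $uv=\delta_{uv}u$; $s(e)e=e=er(e)$, $r(e)e^*=e^*=e^*s(e)$;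 $e^*f=\delta_{ef}r(e)$; $\sum_{e\in s^{-1}(v)}ee^*=v$ for regular $v$. For a cycle $x=x_1\dots x_m$ in $E$ (a closed path in $E_d$ of real edges) and $1\le i\le m$, let $X_i$ be the set of basis paths $y=y_1\dots y_n$ with $n\ge1$ such that $x_iy_1$ is a basis path and $y_1\ne x_{i+1}$ ($x_{m+1}=x_1$). The graph $F_x$ has distinct vertices $w_i$ ($1\le i\le m$) and $w_{i,y}$ ($y\in X_i$), and edges $f_i$ from $w_{i-1}$ to $w_i$ ($w_0=w_m$) and $f_{i,y}$ with range $w_{i,y}$ and source $w_i$ if $|y|=1$, resp. $w_{i,y_1\dots y_{n-1}}$ if $n\ge 2$. The homomorphism $\phi_x:F_x\to E_d$: $\phi_x(w_i)=r_d(x_i)$, $\phi_x(w_{i,y})=r_d(y)$, $\phi_x(f_i)=x_i$, $\phi_x(f_{i,y})=$ last edge of $y$. $W(F,\phi)$ is the $K$-vector space with basis $F^0$ with the right $L(E)$-action on $w\in F^0$: $w.v=w$ if $\phi(w)=v$, else $0$; $w.e=r(f)$ if some $f\in s^{-1}(w)$ has $\phi(f)=e$, $w.e=s(f)$ if some $f\in r^{-1}(w)$ has $\phi(f)=e^*$, else $0$; $w.e^*=r(f)$ if some $f\in s^{-1}(w)$ has $\phi(f)=e^*$, $w.e^*=s(f)-T$ if $e$ is special and some $f\in r^{-1}(w)$ has $\phi(f)=e$, where $T=\sum r(p)$ over all paths $p$ in $F$ starting at $s(f)$ with $\phi(p)=dd^*$ for some $d\in s^{-1}(s(e))\setminus\{e\}$,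 else $0$. *)

From HB Require Import structures.
From mathcomp Require Import all_boot all_algebra.
From Stdlib Require Import ClassicalEpsilon.
From Stdlib Require List.

Set Implicit Arguments.
Unset Strict Implicit.
Unset Printing Implicit Defensive.
Import GRing.Theory.
Local Open Scope ring_scope.

(* A graph E = (V0, E1, s, r).  Edges of the double graph: real e / ghost e^*. *)
Inductive letter (E1 : Type) := Real (e : E1) | Ghost (e : E1).
Arguments Real {E1}. Arguments Ghost {E1}.

Definition sd {V0 E1 : Type} (s r : E1 -> V0) (a : letter E1) : V0 :=
  match a with Real e => s e | Ghost e => r e end.
Definition rd {V0 E1 : Type} (s r : E1 -> V0) (a : letter E1) : V0 :=
  match a with Real e => r e | Ghost e => s e end.

Definition row_finite {V0 E1 : Type} (s : E1 -> V0) : Prop :=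
  forall v : V0, exists l : seq E1, forall e, s e = v -> List.In e l.

Definition special_choice {V0 E1 : Type} (s : E1 -> V0) (special : E1 -> Prop)
  : Prop :=
  forall v : V0, (exists e, s e = v) ->
    exists e, (s e = v /\ special e) /\
              forall e', s e' = v /\ special e' -> e' = e.

Fixpoint consecutive {A B : Type} (src rng : A -> B) (w : seq A) : Prop :=
  match w with
  | a :: ((b :: _) as t) => rng a = src b /\ consecutive src rng t
  | _ => True
  end.

Definition epath {V0 E1 : Type} (s r : E1 -> V0) (p : seq E1) : Prop :=
  p <> [::] /\ consecutive s r p.

Definition gstar {E1 : Type} (p : seq E1) : seq (letter E1) :=
  rev (map Ghost p).

(* basis paths of length >= 1 (the vertices are the basis paths of length 0) *)
Definition basis_word {V0 E1 : Type} (s r : E1 -> V0) (special : E1 -> Prop)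
  (w : seq (letter E1)) : Prop :=
  (exists p, epath s r p /\ w = map Real p) \/
  (exists p, epath s r p /\ w = gstar p) \/
  (exists p' q' ek fn,
      epath s r (rcons p' ek) /\ epath s r (rcons q' fn) /\ r ek = r fn /\
      (ek <> fn \/ (ek = fn /\ ~ special ek)) /\
      w = map Real (rcons p' ek) ++ gstar (rcons q' fn)).

(* a cycle x_0 ... x_{m-1} of length m >= 1 (0-based indices) *)
Definition is_cycle {V0 E1 : Type} (s r : E1 -> V0) (m : nat) (x : nat -> E1)
  : Prop :=
  (0 < m)%N /\
  (forall i, (i.+1 < m)%N -> r (x i) = s (x i.+1)) /\
  s (x 0%N) = r (x m.-1) /\
  (forall i j, (i < m)%N -> (j < m)%N -> s (x i) = s (x j) -> i = j).

(* vertices / edges of F are the elements of fV / fE satisfying vV / vE *)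
Record fgraph (V0 E1 : Type) := FGraph {
  fV : Type; fE : Type;
  vV : fV -> Prop; vE : fE -> Prop;
  fs : fE -> fV; fr : fE -> fV;
  phiV : fV -> V0; phiE : fE -> letter E1 }.
Arguments fV {V0 E1} _. Arguments fE {V0 E1} _.
Arguments vV {V0 E1} _ _. Arguments vE {V0 E1} _ _.
Arguments fs {V0 E1} _ _. Arguments fr {V0 E1} _ _.
Arguments phiV {V0 E1} _ _. Arguments phiE {V0 E1} _ _.

(* X_i (0-based i) *)
Definition Xset {V0 E1 : Type} (s r : E1 -> V0) (special : E1 -> Prop)
  (m : nat) (x : nat -> E1) (i : nat) (y : seq (letter E1)) : Prop :=
  exists y1 y', y = y1 :: y' /\ basis_word s r special y /\
    basis_word s r special [:: Real (x i); y1] /\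
    y1 <> Real (x (i.+1 %% m)%N).

Inductive FxV (E1 : Type) := FW (i : nat) | FWy (i : nat) (y : seq (letter E1)).
Inductive FxE (E1 : Type) := FF (i : nat) | FFy (i : nat) (y : seq (letter E1)).
Arguments FW {E1}. Arguments FWy {E1}. Arguments FF {E1}. Arguments FFy {E1}.

Definition Fx {V0 E1 : Type} (s r : E1 -> V0) (special : E1 -> Prop)
  (m : nat) (x : nat -> E1) : fgraph V0 E1 :=
  {| fV := FxV E1; fE := FxE E1;
     vV := fun v => match v with
                    | FW i => (i < m)%N
                    | FWy i y => (i < m)%N /\ Xset s r special m x i y end;
     vE := fun f => match f with
                    | FF i => (i < m)%N
                    | FFy i y => (i < m)%N /\ Xset s r special m x i y end;
     (* f_i : w_{i-1} -> w_i ;  f_{i,y} : w_i or w_{i,y_1..y_{n-1}} -> w_{i,y} *)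
     fs := fun f => match f with
                    | FF i => FW ((i + m).-1 %% m)%N
                    | FFy i y => if size y == 1%N then FW i
                                 else FWy i (take (size y).-1 y) end;
     fr := fun f => match f with
                    | FF i => FW i
                    | FFy i y => FWy i y end;
     phiV := fun v => match v with
                      | FW i => r (x i)
                      | FWy i y => rd s r (last (Real (x i)) y) end;
     phiE := fun f => match f with
                      | FF i => Real (x i)
                      | FFy i y => last (Real (x i)) y end |}.

Definition delta {K : fieldType} {A : Type} (w : A) : A -> K :=
  fun u => if excluded_middle_informative (u = w) then 1 else 0.

Definition pick_or {A B : Type} (P : A -> Prop) (f : A -> B) (dflt : B) : B :=
  match excluded_middle_informative (exists a, P a) with
  | left H => f (proj1_sig (constructive_indefinite_description P H))
  | right _ => dflt
  end.

(* number of elements of a finite set (0 if infinite; only used on finite sets) *)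
Definition fincard {A : Type} (P : A -> Prop) : nat :=
  match excluded_middle_informative
          (exists l : seq A, List.NoDup l /\ forall a, List.In a l <-> P a) with
  | left H => size (proj1_sig (constructive_indefinite_description _ H))
  | right _ => 0%N
  end.

(* generators v, e, e^* of L(E) *)
Inductive gen (V0 E1 : Type) := GV (v : V0) | GE (e : E1) | GS (e : E1).
Arguments GV {V0 E1}. Arguments GE {V0 E1}. Arguments GS {V0 E1}.

(* T = sum of r(p) over paths p of F starting at s(f) with phi(p) = d d^*,
   d in s^{-1}(s(e)) \ {e}; as a vector: coefficient of u = number of such
   paths ending at u *)
Definition Tvec (K : fieldType) {V0 E1 : Type} (s : E1 -> V0)
  (F : fgraph V0 E1) (f : fE F) (e : E1) : fV F -> K :=
  fun u => (fincard (fun p : fE F * fE F * E1 =>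
     let '(f1, f2, d) := p in
       vE F f1 /\ vE F f2 /\ s d = s e /\ d <> e /\
       fs F f1 = fs F f /\ fr F f1 = fs F f2 /\
       phiE F f1 = Real d /\ phiE F f2 = Ghost d /\ fr F f2 = u))%:R.

Definition basis_act (K : fieldType) {V0 E1 : Type} (s : E1 -> V0)
  (special : E1 -> Prop) (F : fgraph V0 E1) (g : gen V0 E1) (w : fV F)
  : fV F -> K :=
  match g with
  | GV v => if excluded_middle_informative (phiV F w = v) then delta w
            else fun _ => 0
  | GE e =>
      pick_or (fun f => vE F f /\ fs F f = w /\ phiE F f = Real e)
        (fun f => delta (fr F f))
        (pick_or (fun f => vE F f /\ fr F f = w /\ phiE F f = Ghost e)
           (fun f => delta (fs F f)) (fun _ => 0))
  | GS e =>
      pick_or (fun f => vE F f /\ fs F f = w /\ phiE F f = Ghost e)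
        (fun f => delta (fr F f))
        (if excluded_middle_informative (special e) then
           pick_or (fun f => vE F f /\ fr F f = w /\ phiE F f = Real e)
             (fun f => fun u => delta (fs F f) u - @Tvec K _ _ s F f e u)
             (fun _ => 0)
         else fun _ => 0)
  end.

(* elements of W(F, phi): finitely supported K-valued functions on F^0 *)
Definition inW (K : fieldType) {V0 E1 : Type} (F : fgraph V0 E1)
  (a : fV F -> K) : Prop :=
  (forall v, a v <> 0 -> vV F v) /\
  exists l : seq (fV F), forall v, a v <> 0 -> List.In v l.

Definition Wact (K : fieldType) {V0 E1 : Type} (s : E1 -> V0)
  (special : E1 -> Prop) (F : fgraph V0 E1) (a : fV F -> K) (g : gen V0 E1)
  (b : fV F -> K) : Prop :=
  exists l : seq (fV F), List.NoDup l /\ (forall v, a v <> 0 -> List.In v l) /\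
    forall u, b u = \sum_(w <- l) a w * basis_act K s special g w u.

(* W(F1,phi1) and W(F2,phi2) are isomorphic as right L(E)-modules:
   a K-linear bijection commuting with the action of the generators of L(E) *)
Definition W_iso (K : fieldType) {V0 E1 : Type} (s : E1 -> V0)
  (special : E1 -> Prop) (F1 F2 : fgraph V0 E1) : Prop :=
  exists T : (fV F1 -> K) -> (fV F2 -> K),
    (forall a, inW a -> inW (T a)) /\
    (forall a b, inW a -> inW b -> T (fun u => a u + b u) = (fun u => T a u + T b u)) /\
    (forall (c : K) a, inW a -> T (fun u => c * a u) = (fun u => c * T a u)) /\
    (forall a b, inW a -> inW b -> T a = T b -> a = b) /\
    (forall b, inW b -> exists a, inW a /\ T a = b) /\
    (forall g a b, inW a -> Wact s special a g b ->
                   Wact s special (T a) g (T b)).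

From Pilot Require Import Defs.
From mathcomp Require Import all_boot all_order all_algebra zify.
From Stdlib Require Import Classical ClassicalEpsilon FunctionalExtensionality.

(* Give the vertices of F_x' a height: w_j has height 0, and w_{j,y} has
   height |y| or -|y| according as the last letter of y is real or ghost.
   Every edge of F_x' labelled by a real edge e that is not on x' goes up and
   every edge labelled by a ghost goes down, so acting by such an e moves each
   vertex in the support of a vector strictly upwards.  In W(F_x), however, the
   vertex w_m is fixed by the path x_1 ... x_m, whose edges are all off x'.
   An isomorphism would send w_m to a nonzero vector with finite support fixed
   by x_1 ... x_m, and a vertex of minimal height in that support cannot be
   reached from the support. *)

Set Implicit Arguments.
Unset Strict Implicit.
Unset Printing Implicit Defensive.
Import Order.TTheory GRing.Theory.
Local Open Scope ring_scope.

Lemma pick_or_ind {A B : Type} (P : A -> Prop) (f : A -> B) d (Q : B -> Prop) :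
  (forall a, P a -> Q (f a)) -> ((~ exists a, P a) -> Q d) -> Q (pick_or P f d).
Proof.
move=> Hf Hd; rewrite /pick_or; case: excluded_middle_informative => [H|H].
  exact: Hf (proj2_sig _).
exact: Hd.
Qed.

Lemma delta_neq0 (K : fieldType) (A : Type) (w u : A) :
  @delta K A w u <> 0 -> u = w.
Proof. by rewrite /delta; case: excluded_middle_informative. Qed.

Lemma delta_self (K : fieldType) (A : Type) (w : A) : @delta K A w w = 1.
Proof. by rewrite /delta; case: excluded_middle_informative. Qed.

Lemma Wact_delta (K : fieldType) (V0 E1 : Type) (s : E1 -> V0)
    (special : E1 -> Prop) (F : Defs.fgraph V0 E1) (g : gen V0 E1) (w : fV F) :
  Wact s special (delta w) g (basis_act K s special g w).
Proof.
exists [:: w]; split; first by constructor; [case | constructor].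
split=> [v Hv|u]; first by left; rewrite (delta_neq0 Hv).
by rewrite big_seq1 delta_self mul1r.
Qed.

Lemma sum_neq0_exists (K : fieldType) (A : Type) (l : seq A) (G : A -> K) :
  \sum_(w <- l) G w <> 0 -> exists w, G w <> 0.
Proof.
move=> Hsum; apply: NNPP => Hall; apply/Hsum/big1 => w _.
by apply: NNPP => Hw; apply: Hall; exists w.
Qed.

Definition Fx_height {E1 : Type} (x : nat -> E1) (v : FxV E1) : int :=
  match v with
  | FW _ => 0
  | FWy i y => match last (Real (x i)) y with
               | Real _ => Posz (size y)
               | Ghost _ => - Posz (size y) end
  end.

Lemma Fx_height_bound {E1 : Type} (x : nat -> E1) i y :
  - Posz (size y) <= Fx_height x (FWy i y) <= Posz (size y).
Proof. by rewrite /=; case: (last _ _) => _; apply/andP; split; lia. Qed.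

Section HeightOffCycle.
Variables (V0 E1 : Type) (s r : E1 -> V0) (special : E1 -> Prop).
Variables (m : nat) (x : nat -> E1).
Local Notation F := (Fx s r special m x).
Local Notation height := (Fx_height x).

Lemma Fx_height_src_FFy i y1 y :
  `|height (fs F (FFy i (y1 :: y)))| <= Posz (size y).
Proof.
rewrite /= eqSS; case: ifP => [/eqP -> //|_].
have := Fx_height_bound x i (take (size y) (y1 :: y)).
by rewrite size_take /= ltnSn; lia.
Qed.

Lemma Fx_edge_Real_height f e :
  vE F f -> (forall j, (j < m)%N -> x j <> e) -> phiE F f = Real e ->
  height (fs F f) < height (fr F f).
Proof.
case: f => [i hi xOff [xe] | i y [_ [y1 [y' [-> _]]]] _ lastE].
  by case: (xOff i hi).
have := Fx_height_src_FFy i y1 y'; move: lastE => /= ->; lia.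
Qed.

Lemma Fx_edge_Ghost_height f e :
  vE F f -> phiE F f = Ghost e -> height (fr F f) < height (fs F f).
Proof.
case: f => [// | i y [_ [y1 [y' [-> _]]]] lastE].
have := Fx_height_src_FFy i y1 y'; move: lastE => /= ->; lia.
Qed.

End HeightOffCycle.

Section ActionOffCycle.
Variables (K : fieldType) (V0 E1 : Type) (s r : E1 -> V0) (special : E1 -> Prop).
Variables (m : nat) (x : nat -> E1) (e : E1).
Hypothesis xOff : forall j, (j < m)%N -> x j <> e.
Local Notation F := (Fx s r special m x).
Local Notation height := (Fx_height x).

Lemma basis_act_GE_height (w u : FxV E1) :
  @basis_act K _ _ s special F (GE e) w u <> 0 -> height w < height u.
Proof.
have pickP (P : _ -> Prop) g d :=
  @pick_or_ind _ _ P g d (fun a => a u <> 0 -> height w < height u).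
apply: (pickP) => [f [vf [fw fE]] act | _].
  rewrite -fw (delta_neq0 act); exact: Fx_edge_Real_height vf xOff fE.
apply: pickP => [f [vf [fw fE]] act | _ //].
rewrite -fw (delta_neq0 act); exact: Fx_edge_Ghost_height vf fE.
Qed.

Lemma Wact_GE_height (b b' : fV F -> K) (u : fV F) :
  Wact s special b (GE e) b' -> b' u <> 0 ->
  exists2 w, b w <> 0 & height w < height u.
Proof.
case=> l [_ [_ ->]] /sum_neq0_exists [w bw_act].
exists w => [bw0|]; first by apply: bw_act; rewrite bw0 mul0r.
by apply: basis_act_GE_height => act0; apply: bw_act; rewrite act0 mulr0.
Qed.

End ActionOffCycle.

Lemma Fx_cycle_basis_act (K : fieldType) (V0 E1 : Type) (s r : E1 -> V0)
    (special : E1 -> Prop) (m : nat) (x : nat -> E1) k :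
  is_cycle s r m x -> (k < m)%N ->
  basis_act K s special (GE (x k)) (fs (Fx s r special m x) (FF k))
  = delta (FW k).
Proof.
move=> [m_gt0 [_ [_ x_inj]]] km /=.
apply: (pick_or_ind (Q := eq^~ _)) => [[i | i y] [/= vf [fsf [xik]]] |].
- by rewrite (x_inj i k) // xik.
- case: vf fsf xik => [_ [y1 [y' [-> [_ [_ y1_next]]]]]].
  case: y' => [|//] [ik] /= y1E; case: y1_next; rewrite y1E ik.
  by rewrite -addn1 modnDml addn1 prednK ?modnDr ?modn_small //; lia.
- by case; exists (FF k).
Qed.

Lemma seq_min_exists (A : Type) (h : A -> int) (P : A -> Prop) (l : seq A) :
  (exists u, List.In u l /\ P u) ->
  exists2 u, P u & forall w, List.In w l -> P w -> h u <= h w.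
Proof.
elim: l => [[u [[] _]] | a l IH] [u [ul Pu]].
case: (classic (exists u, List.In u l /\ P u)) => [/IH [v Pv vmin] | nol].
  case: (classic (P a /\ h a < h v)) => [[Pa av] | not_av].
    exists a => // w [<- // | wl] Pw; exact: le_trans (ltW av) (vmin w wl Pw).
  exists v => // w [<- | wl] Pw; last exact: vmin.
  by rewrite leNgt; apply/negP => av; apply: not_av.
have Pa : P a by case: ul => [-> // | ul]; case: nol; exists u.
by exists a => // w [<- // | wl] Pw; case: nol; exists w.
Qed.

Lemma rising_loop_vanishes (R : zmodType) (A : Type) (h : A -> int) (n : nat)
    (b : nat -> A -> R) (l : seq A) :
  (0 < n)%N -> b n = b 0%N -> (forall u, b 0%N u <> 0 -> List.In u l) ->
  (forall k u, (k < n)%N -> b k.+1 u <> 0 -> exists2 w, b k w <> 0 & h w < h u) ->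
  forall u, b 0%N u = 0.
Proof.
move=> n_gt0 bn supp rise.
have descend k u : (k <= n)%N -> b k u <> 0 ->
    exists2 w, b 0%N w <> 0 & h w + k%:Z <= h u.
  elim: k u => [|k IH] u kn bku; first by exists u; rewrite ?addr0.
  have [w1 bw1 w1u] := rise k u kn bku.
  have [w bw ww1] := IH w1 (ltnW kn) bw1.
  by exists w => //; lia.
move=> u; apply: NNPP => bu.
have [|v bv vmin] := @seq_min_exists _ h (fun u => b 0%N u <> 0) l.
  by exists u; split => //; apply: supp.
have [w bw wv] := descend n v (leqnn n) ltac:(by rewrite bn).
by have := vmin w (supp w bw) bw; lia.
Qed.

Lemma homog_inj_map_eq0 (K : fieldType) (V0 E1 : Type) (F1 F2 : Defs.fgraph V0 E1)
    (T : (fV F1 -> K) -> (fV F2 -> K)) (a : fV F1 -> K) :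
  (forall (c : K) a, inW a -> T (fun u => c * a u) = (fun u => c * T a u)) ->
  (forall a b, inW a -> inW b -> T a = T b -> a = b) ->
  inW a -> (forall u, T a u = 0) -> a = (fun _ => 0).
Proof.
move=> Tscale Tinj aW Ta0.
have zeroW : inW (fun _ : fV F1 => 0 : K) by split => //; exists [::].
apply: Tinj => //.
have := Tscale 0 a aW.
rewrite (_ : (fun u => 0 * a u) = (fun _ => 0)) => [->|].
  by apply: functional_extensionality => u; rewrite Ta0 mul0r.
by apply: functional_extensionality => u; rewrite mul0r.
Qed.

Theorem theorem6p3 (K : fieldType) (V0 E1 : Type) (s r : E1 -> V0)
  (special : E1 -> Prop)
  (Hrf : row_finite s) (Hsp : special_choice s special)
  (m : nat) (x : nat -> E1) (m' : nat) (x' : nat -> E1)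
  (Hx : is_cycle s r m x) (Hx' : is_cycle s r m' x')
  (Hdisj : forall i j, (i < m)%N -> (j < m')%N -> s (x i) <> s (x' j)) :
  ~ W_iso K s special (Fx s r special m x) (Fx s r special m' x').
Proof.
move=> [T [TW [_ [Tscale [Tinj [_ Tact]]]]]].
have [m_gt0 _] := Hx.
pose src k : fV (Fx s r special m x) -> K := delta (fs (Fx s r special m x) (FF k)).
have srcW k : inW (src k).
  split=> [v vk | ]; first by rewrite (delta_neq0 vk) /= ltn_pmod.
  by exists [:: fs (Fx s r special m x) (FF k)] => v vk; left; rewrite (delta_neq0 vk).
have src_act k : (k < m)%N -> Wact s special (src k) (GE (x k)) (src k.+1).
  move=> km; rewrite {2}/src /= modnDr modn_small //.
  rewrite -(Fx_cycle_basis_act K special Hx km); exact: Wact_delta.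
have src_loop : src m = src 0%N.
  by rewrite /src /= add0n (_ : (m + m).-1 = m.-1 + m)%N ?modnDr //; lia.
have xOff k : (k < m)%N -> forall j, (j < m')%N -> x' j <> x k.
  by move=> km j jm xjk; apply: (Hdisj k j km jm); rewrite xjk.
have [_ [l Tsupp]] := TW _ (srcW 0%N).
have T0 := @rising_loop_vanishes _ _ (Fx_height x') m (fun k => T (src k)) l
  m_gt0 (congr1 T src_loop) Tsupp
  (fun k u km => Wact_GE_height (xOff k km) (Tact _ _ _ (srcW k) (src_act k km))).
have /(congr1 (fun a => a (fs (Fx s r special m x) (FF 0%N)))) :=
  homog_inj_map_eq0 Tscale Tinj (srcW 0%N) T0.
by rewrite /src delta_self => /eqP; rewrite oner_eq0.
Qed.
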